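(* Let $p$ be an odd prime and $r$ an integer with $p \nmid r$. Let $$f_{r,p}(x) = \frac{1}{2\sqrt{2}}\left((1+\sqrt{2})^r (x+\sqrt{2})^p - (1-\sqrt{2})^r (x - \sqrt{2})^p\right) \in \mathbb{Z}[x].$$ Then $f_{r,p}$ has $p$ distinct roots $\rho_0, \dots, \rho_{p-1}$ given by $$\rho_i = \sqrt{2} + \frac{2\sqrt{2}}{(-1)^r (1+\sqrt{2})^{-2r/p} \zeta_p^i - 1}, \quad 0 \leq i \leq p-1,$$ where $\zeta_p = e^{2\pi i/p}$ and $(1+\sqrt{2})^{-2r/p}$ denotes the positive real value. The only real root is $\rho_0$. *)

From Stdlib Require Import Reals ZArith Znumtheory.
From Coquelicot Require Import Coquelicot.
Open Scope R_scope.

Definition f_rp (r : Z) (p : nat) (x : C) : C :=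
  Cdiv (Cminus (Cmult (RtoC (powerRZ (1 + sqrt 2) r)) (Cpow (Cplus x (RtoC (sqrt 2))) p))
               (Cmult (RtoC (powerRZ (1 - sqrt 2) r)) (Cpow (Cminus x (RtoC (sqrt 2))) p)))
       (RtoC (2 * sqrt 2)).

Definition zeta (p : nat) : C := (cos (2 * PI / INR p), sin (2 * PI / INR p)).

Definition rho (r : Z) (p : nat) (i : nat) : C :=
  Cplus (RtoC (sqrt 2))
    (Cdiv (RtoC (2 * sqrt 2))
       (Cminus (Cmult (RtoC (powerRZ (-1) r * Rpower (1 + sqrt 2) (-2 * IZR r / INR p)))
                      (Cpow (zeta p) i))
               (RtoC 1))).

From Stdlib Require Import Reals ZArith Znumtheory Lia Lra.
From Coquelicot Require Import Coquelicot.
Open Scope R_scope.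

(* Write s = sqrt 2 and m = (-1)^r (1 + s)^(-2r/p).  Since 1 - s = -1/(1 + s)
   and p is odd, (1 - s)^r = (1 + s)^r m^p, so f_{r,p}(z) = 0 iff
   (z + s)^p = m^p (z - s)^p.  As z = s is not a root, this says that
   (z + s)/(z - s) is one of the p numbers m zeta^i, and z is recovered by the
   inverse Moebius map w |-> s + 2s/(w - 1), which is exactly rho_i.  These
   m zeta^i are distinct and differ from 1 because |m| <> 1 (p does not divide r,
   so r <> 0); m zeta^i, hence rho_i, is real only for i = 0 because p is odd. *)

Lemma Cmult_reg_l (a x y : C) : a <> RtoC 0 -> (a * x = a * y)%C -> x = y.
Proof.
  intros Ha H. apply (f_equal (Cmult (/ a))) in H.
  rewrite !Cmult_assoc, Cinv_l, !Cmult_1_l in H by exact Ha. exact H.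
Qed.

Lemma RtoC_neq0 x : x <> 0 -> RtoC x <> RtoC 0.
Proof. intros Hx H. apply Hx. apply (f_equal fst) in H. exact H. Qed.

Definition cis (t : R) : C := (cos t, sin t).

Lemma cis_add a b : Cmult (cis a) (cis b) = cis (a + b).
Proof. unfold cis, Cmult; simpl. rewrite cos_plus, sin_plus. f_equal; ring. Qed.

Lemma cis_pow t n : Cpow (cis t) n = cis (INR n * t).
Proof.
  induction n as [|n IH].
  - simpl. rewrite Rmult_0_l. unfold cis. rewrite cos_0, sin_0. reflexivity.
  - rewrite Cpow_S, IH, cis_add, S_INR. f_equal. ring.
Qed.

Lemma cis_2kPI (k : Z) : cis (2 * IZR k * PI) = RtoC 1.
Proof.
  unfold cis. replace (2 * IZR k * PI) with (2 * (IZR k * PI)) by ring.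
  rewrite cos_2a_sin, sin_2a, sin_eq_0_1; [|exists k; reflexivity].
  unfold RtoC. f_equal; ring.
Qed.

Lemma cis_eq_1 x : cis x = RtoC 1 -> exists k : Z, x = 2 * IZR k * PI.
Proof.
  intros H. apply (f_equal fst) in H. simpl in H.
  replace x with (2 * (x / 2)) in H by field. rewrite cos_2a_sin in H.
  assert (Hs : sin (x / 2) = 0) by nra.
  destruct (sin_eq_0_0 _ Hs) as [k Hk]. exists k. lra.
Qed.

Lemma Cmod_cis t : Cmod (cis t) = 1.
Proof.
  unfold Cmod, cis; cbn [fst snd]. rewrite <- sqrt_1. f_equal.
  pose proof (sin2_cos2 t) as H. unfold Rsqr in H. nra.
Qed.

Lemma Cmod_eq_1_cis v : Cmod v = 1 -> exists t, v = cis t.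
Proof.
  destruct v as [x y]. unfold Cmod; cbn [fst snd]. intros H.
  assert (H2 : x ^ 2 + y ^ 2 = 1).
  { rewrite <- (sqrt_sqrt (x ^ 2 + y ^ 2)) by nra. rewrite H. ring. }
  assert (Hs : sqrt (1 - x²) = Rabs y).
  { rewrite <- sqrt_Rsqr_abs. f_equal. unfold Rsqr. nra. }
  destruct (Rle_or_lt 0 y) as [Hy|Hy].
  - exists (acos x). unfold cis.
    rewrite cos_acos, sin_acos, Hs, Rabs_right by nra. reflexivity.
  - exists (- acos x). unfold cis.
    rewrite cos_neg, sin_neg, cos_acos, sin_acos, Hs, Rabs_left by nra.
    f_equal; ring.
Qed.

Lemma zeta_pow p i : Cpow (zeta p) i = cis (INR i * (2 * PI / INR p)).
Proof. rewrite <- cis_pow. reflexivity. Qed.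

Lemma zeta_pow_order p : Cpow (zeta p) p = RtoC 1.
Proof.
  destruct p as [|p]; [reflexivity|].
  rewrite zeta_pow, <- (cis_2kPI 1). f_equal. field. apply not_0_INR. lia.
Qed.

Lemma Cpow_mult_zeta_pow q p i : Cpow (q * Cpow (zeta p) i)%C p = Cpow q p.
Proof.
  rewrite Cpow_mult_l, <- Cpow_mult_r, Nat.mul_comm, Cpow_mult_r, zeta_pow_order.
  rewrite Cpow_1_l. apply Cmult_1_r.
Qed.

Lemma zeta_pow_neq0 p i : Cpow (zeta p) i <> RtoC 0.
Proof.
  intros H. apply (f_equal Cmod) in H.
  rewrite zeta_pow, Cmod_cis, Cmod_0 in H. lra.
Qed.

Lemma roots_of_unity p v : (0 < p)%nat -> Cpow v p = RtoC 1 ->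
  exists k, (k < p)%nat /\ v = Cpow (zeta p) k.
Proof.
  intros Hp H.
  assert (Hm : Cmod v = 1).
  { assert (Hmp : Cmod v ^ p = 1) by (rewrite <- Cmod_pow, H; apply Cmod_1).
    destruct (pow_R1 _ _ Hmp) as [Habs|]; [|lia].
    rewrite Rabs_right in Habs by (apply Rle_ge, Cmod_ge_0). exact Habs. }
  destruct (Cmod_eq_1_cis v Hm) as [t ->].
  rewrite cis_pow in H. destruct (cis_eq_1 _ H) as [n Hn].
  assert (HpZ : (0 < Z.of_nat p)%Z) by lia.
  pose proof (Z.mod_pos_bound n (Z.of_nat p) HpZ) as Hbound.
  pose proof (Z.div_mod n (Z.of_nat p) ltac:(lia)) as Hdiv.
  exists (Z.to_nat (n mod Z.of_nat p)). split; [lia|].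
  rewrite zeta_pow, INR_IZR_INZ, Z2Nat.id by lia.
  set (q := (n / Z.of_nat p)%Z) in *. set (k := (n mod Z.of_nat p)%Z) in *.
  assert (Hk : IZR k = IZR n - IZR (Z.of_nat p) * IZR q).
  { rewrite Hdiv at 1. rewrite plus_IZR, mult_IZR. ring. }
  assert (HpR : INR p <> 0) by (apply not_0_INR; lia).
  transitivity (cis (IZR k * (2 * PI / INR p) + 2 * IZR q * PI)).
  - f_equal. rewrite Hk, <- INR_IZR_INZ.
    apply (Rmult_eq_reg_l (INR p)); auto.
    replace (INR p * t) with (2 * IZR n * PI) by lra. field. auto.
  - rewrite <- cis_add, cis_2kPI. apply Cmult_1_r.
Qed.

Lemma zeta_pow_eq_1 p n : (0 < p)%nat -> Cpow (zeta p) n = RtoC 1 ->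
  (Z.of_nat p | Z.of_nat n)%Z.
Proof.
  intros Hp H. rewrite zeta_pow in H. destruct (cis_eq_1 _ H) as [k Hk].
  assert (HpR : INR p <> 0) by (apply not_0_INR; lia).
  assert (Hn : INR n = IZR k * INR p).
  { apply (Rmult_eq_reg_r (2 * PI / INR p)).
    - rewrite Hk. field. auto.
    - pose proof PI_RGT_0. apply Rmult_integral_contrapositive_currified; [lra|].
      apply Rinv_neq_0_compat; auto. }
  rewrite !INR_IZR_INZ, <- mult_IZR in Hn. apply eq_IZR in Hn.
  exists k. exact Hn.
Qed.

Lemma zeta_pow_inj p i j : (i < p)%nat -> (j < p)%nat ->
  Cpow (zeta p) i = Cpow (zeta p) j -> i = j.
Proof.
  assert (Hsym : forall i j, (i <= j < p)%nat ->
            Cpow (zeta p) i = Cpow (zeta p) j -> i = j).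
  { intros a b Hab H.
    replace b with (a + (b - a))%nat in H by lia.
    rewrite Cpow_add_r in H.
    assert (H1 : Cpow (zeta p) (b - a) = RtoC 1).
    { apply (Cmult_reg_l (Cpow (zeta p) a)); [apply zeta_pow_neq0|].
      rewrite Cmult_1_r. symmetry. exact H. }
    destruct (zeta_pow_eq_1 p (b - a) ltac:(lia) H1) as [k Hk].
    rewrite Nat2Z.inj_sub in Hk by lia.
    destruct (Z.lt_trichotomy k 0) as [h|[h|h]]; nia. }
  intros Hi Hj H. destruct (Nat.le_ge_cases i j).
  - apply Hsym; auto.
  - symmetry. apply Hsym; auto.
Qed.

Lemma Im_zeta_pow_neq0 p i : Nat.Odd p -> (0 < i < p)%nat ->
  Im (Cpow (zeta p) i) <> 0.
Proof.
  (* A real p-th root of unity squares to 1, and p does not divide 2i. *)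
  intros [m Hm] Hi Him.
  assert (H2 : Cpow (zeta p) (i * 2) = RtoC 1).
  { rewrite Cpow_mult_r. destruct (Cpow (zeta p) i) as [x y] eqn:Hz.
    simpl in Him. subst y.
    assert (Hx : x * x = 1).
    { apply (f_equal Cmod) in Hz. rewrite zeta_pow, Cmod_cis in Hz.
      unfold Cmod in Hz; cbn [fst snd] in Hz.
      replace (0 ^ 2) with 0 in Hz by ring. rewrite Rplus_0_r in Hz.
      pose proof (sqrt_sqrt (x ^ 2) ltac:(nra)) as Hs. rewrite <- Hz in Hs. nra. }
    unfold Cpow, Cmult, RtoC; simpl. f_equal; nra. }
  destruct (zeta_pow_eq_1 p _ ltac:(lia) H2) as [k Hk].
  destruct (Z.lt_trichotomy k 1) as [h|[h|h]]; nia.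
Qed.

Definition cayley (s : R) (w : C) : C := (RtoC s + RtoC (2 * s) / (w - RtoC 1))%C.

Section Cayley.
Variable s : R.
Hypothesis hs : s <> 0.

Let hs2 : RtoC (2 * s) <> RtoC 0.
Proof. apply RtoC_neq0. lra. Qed.

Lemma cayley_add_s w : w <> RtoC 1 ->
  (cayley s w + RtoC s = RtoC (2 * s) / (w - RtoC 1) * w)%C.
Proof.
  intro Hw. assert (w - RtoC 1 <> RtoC 0)%C by (apply Cminus_eq_contra, Hw).
  unfold cayley. rewrite RtoC_mult. field. auto.
Qed.

Lemma cayley_sub_s w :
  (cayley s w - RtoC s = RtoC (2 * s) / (w - RtoC 1))%C.
Proof. unfold cayley. ring. Qed.

Lemma cayley_sub_s_neq0 w : w <> RtoC 1 -> (cayley s w - RtoC s <> RtoC 0)%C.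
Proof.
  intros Hw H. rewrite cayley_sub_s in H.
  assert (w - RtoC 1 <> RtoC 0)%C by (apply Cminus_eq_contra, Hw).
  apply (f_equal (Cmult (w - RtoC 1))) in H.
  replace ((w - RtoC 1) * (RtoC (2 * s) / (w - RtoC 1)))%C with (RtoC (2 * s)) in H
    by (field; auto).
  rewrite Cmult_0_r in H. auto.
Qed.

Lemma cayley_ratio w : w <> RtoC 1 ->
  ((cayley s w + RtoC s) / (cayley s w - RtoC s))%C = w.
Proof.
  intro Hw. pose proof (cayley_sub_s_neq0 w Hw) as H0.
  rewrite cayley_add_s, <- cayley_sub_s by exact Hw. field. exact H0.
Qed.

Lemma cayley_inj w1 w2 : w1 <> RtoC 1 -> w2 <> RtoC 1 ->
  cayley s w1 = cayley s w2 -> w1 = w2.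
Proof. intros H1 H2 H. rewrite <- (cayley_ratio w1), <- (cayley_ratio w2), H; auto. Qed.

Lemma cayley_ratio_inv z : z <> RtoC s ->
  cayley s ((z + RtoC s) / (z - RtoC s))%C = z.
Proof.
  intro Hz. assert (z - RtoC s <> RtoC 0)%C by (apply Cminus_eq_contra, Hz).
  unfold cayley. rewrite RtoC_mult. field.
  split; [assumption|].
  replace (z + RtoC s - (z - RtoC s))%C with (RtoC (2 * s)) by (rewrite RtoC_mult; ring).
  exact hs2.
Qed.

Lemma cayley_pow_eq w n : w <> RtoC 1 ->
  Cpow (cayley s w + RtoC s)%C n = (Cpow w n * Cpow (cayley s w - RtoC s)%C n)%C.
Proof.
  intro Hw. rewrite cayley_add_s, cayley_sub_s, Cpow_mult_l by exact Hw.
  apply Cmult_comm.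
Qed.

Lemma pow_eq_cayley n q z : (0 < n)%nat -> q <> RtoC 0 ->
  Cpow (z + RtoC s)%C n = (Cpow q n * Cpow (z - RtoC s)%C n)%C ->
  exists k, (k < n)%nat /\ z = cayley s (q * Cpow (zeta n) k)%C.
Proof.
  intros Hn Hq H.
  assert (Hzs : (z - RtoC s <> RtoC 0)%C).
  { intro H0. assert (Hz : z = RtoC s) by (apply Ceq_minus; exact H0).
    rewrite H0, Hz in H. destruct n as [|n]; [lia|].
    rewrite (Cpow_S (RtoC 0)), Cmult_0_l, Cmult_0_r in H.
    revert H. apply Cpow_nz.
    replace (RtoC s + RtoC s)%C with (RtoC (2 * s)) by (rewrite RtoC_mult; ring).
    exact hs2. }
  set (w := ((z + RtoC s) / (z - RtoC s))%C).
  assert (Hv : Cpow (w / q)%C n = RtoC 1).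
  { unfold w, Cdiv. rewrite !Cpow_mult_l, !Cpow_inv, H by auto.
    field. split; apply Cpow_nz; auto. }
  destruct (roots_of_unity n _ Hn Hv) as [k [Hk Hwk]].
  exists k. split; [exact Hk|].
  replace (q * Cpow (zeta n) k)%C with w by (rewrite <- Hwk; field; auto).
  symmetry. apply cayley_ratio_inv. intro Hz. apply Hzs. rewrite Hz. ring.
Qed.

End Cayley.

Lemma Im_cayley s w : w <> RtoC 1 ->
  Im (cayley s w) = - (2 * s * Im w) / ((Re w - 1) ^ 2 + Im w ^ 2).
Proof.
  destruct w as [x y]. intro Hw.
  assert (Hd : (x - 1) ^ 2 + y ^ 2 <> 0).
  { intro H. apply Hw. pose proof (pow2_ge_0 (x - 1)). pose proof (pow2_ge_0 y).
    assert (Hx : x - 1 = 0) by (apply Rsqr_0_uniq; unfold Rsqr; lra).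
    assert (Hy : y = 0) by (apply Rsqr_0_uniq; unfold Rsqr; lra).
    unfold RtoC. f_equal; lra. }
  unfold cayley, Cdiv, Cinv, Cmult, Cplus, Cminus, Copp, RtoC, Im, Re; simpl.
  field. intro H. apply Hd. rewrite <- H. ring.
Qed.

Lemma Im_cayley_real s w : w <> RtoC 1 -> Im w = 0 -> Im (cayley s w) = 0.
Proof. intros Hw Hi. rewrite Im_cayley, Hi by exact Hw. unfold Rdiv. ring. Qed.

Lemma Im_cayley_neq0 s w : s <> 0 -> w <> RtoC 1 -> Im w <> 0 -> Im (cayley s w) <> 0.
Proof.
  intros Hs Hw Hi. rewrite Im_cayley by exact Hw.
  assert (0 < (Re w - 1) ^ 2 + Im w ^ 2).
  { pose proof (pow2_ge_0 (Re w - 1)). assert (0 < Im w ^ 2) by (apply pow2_gt_0; exact Hi). lra. }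
  unfold Rdiv. apply Rmult_integral_contrapositive_currified.
  - apply Ropp_neq_0_compat. apply Rmult_integral_contrapositive_currified; [lra|exact Hi].
  - apply Rinv_neq_0_compat. lra.
Qed.

Lemma pow_odd_involutive x n : x * x = 1 -> Nat.Odd n -> x ^ n = x.
Proof.
  intros Hx [m ->]. rewrite pow_add, pow_mult. simpl.
  rewrite Rmult_1_r, Hx, pow1. ring.
Qed.

Lemma prime_odd p : prime (Z.of_nat p) -> p <> 2%nat -> Nat.Odd p.
Proof.
  intros hp hp2. destruct (Nat.Even_or_Odd p) as [[k Hk]|Hk]; [exfalso|exact Hk].
  assert (Hd : (2 | Z.of_nat p)%Z) by (exists (Z.of_nat k); lia).
  pose proof (prime_ge_2 _ hp).
  destruct (prime_divisors _ hp 2 Hd) as [h|[h|[h|h]]]; lia.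
Qed.

Lemma sqrt2_sq : sqrt 2 * sqrt 2 = 2.
Proof. apply sqrt_sqrt. lra. Qed.

Lemma sqrt2_gt1 : 1 < sqrt 2.
Proof. rewrite <- sqrt_1. apply sqrt_lt_1; lra. Qed.

Definition rho_scale (r : Z) (p : nat) : R :=
  powerRZ (-1) r * Rpower (1 + sqrt 2) (-2 * IZR r / INR p).

Lemma rho_cayley r p i :
  rho r p i = cayley (sqrt 2) (RtoC (rho_scale r p) * Cpow (zeta p) i)%C.
Proof. reflexivity. Qed.

Lemma rho_scale_neq0 r p : rho_scale r p <> 0.
Proof.
  apply Rmult_integral_contrapositive_currified.
  - apply powerRZ_NOR. lra.
  - apply Rgt_not_eq. apply exp_pos.
Qed.

Lemma powerRZ_m1_sq r : powerRZ (-1) r * powerRZ (-1) r = 1.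
Proof. rewrite <- powerRZ_mult. replace (-1 * -1) with 1 by ring. apply powerRZ_R1. Qed.

Lemma rho_scale_pow_odd r p : Nat.Odd p ->
  rho_scale r p ^ p = powerRZ (-1) r * Rpower (1 + sqrt 2) (-2 * IZR r).
Proof.
  intros hodd.
  assert (HpR : INR p <> 0) by (apply not_0_INR; destruct hodd; lia).
  unfold rho_scale.
  rewrite Rpow_mult_distr, pow_odd_involutive by (apply powerRZ_m1_sq || exact hodd).
  rewrite <- Rpower_pow, Rpower_mult by apply exp_pos.
  do 2 f_equal. field. exact HpR.
Qed.

Lemma powerRZ_one_sub_sqrt2 r :
  powerRZ (1 - sqrt 2) r = powerRZ (-1) r * Rpower (1 + sqrt 2) (- IZR r).
Proof.
  pose proof sqrt2_sq. pose proof sqrt2_gt1.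
  replace (1 - sqrt 2) with (-1 * / (1 + sqrt 2)).
  2:{ apply (Rmult_eq_reg_r (1 + sqrt 2)); [|lra].
      rewrite Rmult_assoc, Rinv_l by lra. nra. }
  rewrite powerRZ_mult, powerRZ_inv', (powerRZ_Rpower (1 + sqrt 2)), Rpower_Ropp by lra.
  reflexivity.
Qed.

Lemma rho_scale_pow r p : Nat.Odd p ->
  powerRZ (1 - sqrt 2) r = powerRZ (1 + sqrt 2) r * rho_scale r p ^ p.
Proof.
  intros hodd. pose proof sqrt2_gt1.
  rewrite rho_scale_pow_odd, powerRZ_one_sub_sqrt2, (powerRZ_Rpower (1 + sqrt 2)) by (exact hodd || lra).
  rewrite <- Rmult_assoc, (Rmult_comm (Rpower _ (IZR r))), Rmult_assoc, <- Rpower_plus.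
  do 2 f_equal. ring.
Qed.

Lemma rho_scale_pow_neq1 r p : r <> 0%Z -> Nat.Odd p -> rho_scale r p ^ p <> 1.
Proof.
  intros hr hodd H. pose proof sqrt2_gt1.
  rewrite rho_scale_pow_odd in H by exact hodd.
  pose proof (powerRZ_m1_sq r) as Hsg.
  set (sg := powerRZ (-1) r) in *. set (A := Rpower (1 + sqrt 2) (-2 * IZR r)) in *.
  assert (Hsq : Rpower (1 + sqrt 2) (-2 * IZR r + -2 * IZR r) = 1).
  { rewrite Rpower_plus. fold A.
    transitivity ((sg * sg) * (A * A)); [rewrite Hsg; ring|].
    transitivity ((sg * A) * (sg * A)); [ring|].
    rewrite H. ring. }
  apply (f_equal ln) in Hsq. rewrite ln_1, ln_Rpower in Hsq.
  assert (ln (1 + sqrt 2) <> 0) by (apply ln_neq_0; lra).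
  apply hr, eq_IZR. nra.
Qed.

Lemma f_rp_factor r p z : Nat.Odd p ->
  f_rp r p z = (RtoC (powerRZ (1 + sqrt 2) r) / RtoC (2 * sqrt 2) *
    (Cpow (z + RtoC (sqrt 2)) p
     - Cpow (RtoC (rho_scale r p)) p * Cpow (z - RtoC (sqrt 2)) p))%C.
Proof.
  intros hodd. unfold f_rp.
  rewrite (rho_scale_pow r p), RtoC_mult, RtoC_pow by exact hodd.
  unfold Cdiv. ring.
Qed.

Lemma f_rp_eq_0 r p z : Nat.Odd p ->
  f_rp r p z = RtoC 0 <->
  Cpow (z + RtoC (sqrt 2)) p
  = (Cpow (RtoC (rho_scale r p)) p * Cpow (z - RtoC (sqrt 2)) p)%C.
Proof.
  intros hodd. pose proof sqrt2_gt1 as Hs.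
  assert (Hc : (RtoC (powerRZ (1 + sqrt 2) r) / RtoC (2 * sqrt 2) <> RtoC 0)%C).
  { rewrite <- RtoC_div by lra. apply RtoC_neq0.
    apply Rmult_integral_contrapositive_currified.
    - apply powerRZ_NOR. lra.
    - apply Rinv_neq_0_compat. lra. }
  rewrite f_rp_factor by exact hodd. split.
  - intro H. apply Ceq_minus. apply (Cmult_reg_l _ _ _ Hc). rewrite H. ring.
  - intro H. rewrite H. ring.
Qed.

Theorem theorem4p1 (p : nat) (r : Z)
  (hp : prime (Z.of_nat p)) (hodd : p <> 2%nat) (hr : ~ (Z.divide (Z.of_nat p) r)) :
  (forall i : nat, (i < p)%nat -> f_rp r p (rho r p i) = RtoC 0) /\
  (forall i j : nat, (i < p)%nat -> (j < p)%nat -> rho r p i = rho r p j -> i = j) /\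
  (forall z : C, f_rp r p z = RtoC 0 -> exists i : nat, (i < p)%nat /\ z = rho r p i) /\
  Im (rho r p 0) = 0 /\
  (forall i : nat, (0 < i < p)%nat -> Im (rho r p i) <> 0).
Proof.
  pose proof (prime_odd p hp hodd) as Hodd.
  assert (Hp : (0 < p)%nat) by (destruct Hodd; lia).
  assert (Hr : r <> 0%Z) by (intros ->; apply hr, Z.divide_0_r).
  assert (Hs : sqrt 2 <> 0) by (pose proof sqrt2_gt1; lra).
  set (q := RtoC (rho_scale r p)).
  assert (Hq : q <> RtoC 0) by apply RtoC_neq0, rho_scale_neq0.
  assert (Hw : forall i, (q * Cpow (zeta p) i)%C <> RtoC 1).
  { intros i H. apply (rho_scale_pow_neq1 r p Hr Hodd).
    apply (f_equal (fun w => Cpow w p)) in H.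
    unfold q in H. rewrite Cpow_mult_zeta_pow, Cpow_1_l, <- RtoC_pow in H.
    apply (f_equal fst) in H. exact H. }
  split; [|split; [|split; [|split]]].
  - intros i _. rewrite rho_cayley, f_rp_eq_0, cayley_pow_eq, Cpow_mult_zeta_pow by auto.
    reflexivity.
  - intros i j Hi Hj H. rewrite !rho_cayley in H.
    apply (zeta_pow_inj p); auto.
    apply (Cmult_reg_l q); auto. apply (cayley_inj (sqrt 2)); auto.
  - intros z Hz. rewrite f_rp_eq_0 in Hz by exact Hodd.
    destruct (pow_eq_cayley (sqrt 2) Hs p q z Hp Hq Hz) as [k Hk].
    exists k. rewrite rho_cayley. exact Hk.
  - rewrite rho_cayley. apply Im_cayley_real; auto.
    rewrite im_scal_l. simpl. ring.
  - intros i Hi. rewrite rho_cayley. apply Im_cayley_neq0; auto.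
    rewrite im_scal_l. apply Rmult_integral_contrapositive_currified.
    + apply rho_scale_neq0.
    + apply Im_zeta_pow_neq0; auto.
Qed.
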